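(* Let $k\ge 1$ and $n\ge 3$, and let $c$ be a connected $k$-colouring of the edges of $K_n$ whose vertices are $v_1,\dots,v_n$, with the following properties: (i) exactly $l$ distinct $3$-sets of colours occur as colour sets of multicoloured triangles; (ii) exactly $k-2$ of these $3$-sets contain colour $k$; (iii) the edges of colour $k$ are exactly the edges of the cycle $v_1v_2\cdots v_nv_1$; (iv) all edges $v_iv_{i+2}$, $i\in[n]$, have the same colour (indices taken mod $n$). Then there is a connected $(k+1)$-colouring $c'$ of the edges of $K_{2n}$, whose vertices can be labelled $v'_1,\dots,v'_{2n}$, with the following properties: (i') exactly $l+k-1$ distinct $3$-sets of colours occur as colour sets of multicoloured triangles; (ii') exactly $k-1$ of these $3$-sets contain colour $k+1$; (iii') the edges of colour $k+1$ form a cycle; (iv') all edges $v'_iv'_{i+2}$, $i\in[2n]$, have the same colour (indices taken mod $2n$).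
   Context: A $k$-colouring of the edges of the complete graph $K_n$ (colours from $\{1,\dots,k\}$) is called connected if for each colour $i$ the edges of colour $i$ form a connected spanning subgraph of $K_n$. A triangle is multicoloured if its three edges have three distinct colours; its colour set is the set of these three colours. *)

From mathcomp Require Import all_boot.
Set Implicit Arguments. Unset Strict Implicit. Unset Printing Implicit Defensive.

(* Colour j (1-indexed, as in the paper) is the ordinal with value j-1.
   A colouring is a function c : 'I_m -> 'I_m -> 'I_k; only its values on
   pairs of distinct vertices matter, and it must be symmetric. *)
Definition colouring (m k : nat) := 'I_m -> 'I_m -> 'I_k.

Definition sym_col m k (c : colouring m k) : Prop := forall x y, c x y = c y x.

Definition connected_col m k (c : colouring m k) : Prop :=
  forall (i : 'I_k) (x y : 'I_m), connect (fun a b => (a != b) && (c a b == i)) x y.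

Definition tri_sets m k (c : colouring m k) : {set {set 'I_k}} :=
  [set S : {set 'I_k} | [exists x : 'I_m, exists y : 'I_m, exists z : 'I_m,
     [&& x != y, y != z, x != z,
         c x y != c y z, c y z != c x z, c x y != c x z &
         S == [set c x y; c y z; c x z]]]].

Definition has_colour k (S : {set 'I_k}) (j : nat) : bool :=
  [exists a in S, val a == j.-1].

Definition n_tri_with m k (c : colouring m k) (j : nat) : nat :=
  #|[set S in tri_sets c | has_colour S j]|.

(* adjacency in the cycle v_1 v_2 ... v_m v_1 (vertex v_i is ordinal i-1) *)
Definition cyc_adj m (x y : 'I_m) : bool :=
  (val y == (val x).+1 %% m) || (val x == (val y).+1 %% m).

Definition colour_is_cycle m k (c : colouring m k) (j : nat) : Prop :=
  exists s : seq 'I_m, [/\ uniq s, 3 <= size s &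
    forall x y : 'I_m, x != y ->
      (val (c x y) == j.-1) =
      [&& x \in s, y \in s & (next s x == y) || (next s y == x)]].

Definition dist2_const m k (c : colouring m k) : Prop :=
  exists col : 'I_k, forall x y : 'I_m, val y = ((val x).+2 %% m) -> c x y = col.

From mathcomp Require Import all_boot zify.
Set Implicit Arguments. Unset Strict Implicit. Unset Printing Implicit Defensive.

(* Let v'_1 ... v'_2n be a cycle covering v_1 ... v_n twice, v'_i lying over
   v_(i mod n).  Colour the 2n-cycle with the new colour k+1, an edge joining
   the two lifts of one vertex with colour k, and every other edge with the
   colour of its projection.  In a multicoloured triangle of c' no two vertices
   lie over the same vertex, so it projects to a multicoloured triangle of c;
   conversely every multicoloured triangle of c lifts.  Since colour k is the
   n-cycle, such a triangle has at most one edge of colour k, and that edge may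
   be lifted either onto the 2n-cycle or off it.  Hence the colour sets of c'
   are those of c, those of c containing k with k renamed k+1, and one new set
   {k+1, k, col}, col being the colour of the edges v_iv_(i+2); it is realised
   by the triangle v'_1 v'_2 v'_(n+3). *)

Lemma modSn_cases m a : a < m -> a.+1 %% m = if a.+1 < m then a.+1 else 0.
Proof.
move=> am; case: ifP => h; first by rewrite modn_small.
have -> : a.+1 = m by lia.
by rewrite modnn.
Qed.

Lemma modSSn_cases m a : 1 < m -> a < m -> a.+2 %% m = if a.+2 < m then a.+2 else a.+2 - m.
Proof.
move=> m_gt1 am; case: ifP => h; first by rewrite modn_small.
have -> : a.+2 = (a.+2 - m) + m by lia.
rewrite modnDr modn_small; lia.
Qed.

Section CycleAdjacency.

Variable m : nat.
Implicit Types x y : 'I_m.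

Lemma cyc_adjP x y : 1 < m -> cyc_adj x y <->
  ((y : nat) = x + 1 \/ (x : nat) = y + 1 \/ ((x : nat) = m - 1 /\ (y : nat) = 0)
   \/ ((y : nat) = m - 1 /\ (x : nat) = 0)).
Proof.
move=> m_gt1; rewrite /cyc_adj /= !modSn_cases ?ltn_ord //.
have := ltn_ord x; have := ltn_ord y.
case: (ltnP x.+1 m); case: (ltnP y.+1 m) => h1 h2 hy hx;
  split => [/orP[/eqP|/eqP]|H]; try lia;
  apply/orP; first [left; apply/eqP; lia | right; apply/eqP; lia].
Qed.

Lemma cyc_adj_sym x y : cyc_adj x y = cyc_adj y x.
Proof. by rewrite /cyc_adj orbC. Qed.

Lemma cyc_adj_neq x y : 1 < m -> cyc_adj x y -> x != y.
Proof. by move=> m_gt1 /(cyc_adjP _ _ m_gt1) H; apply/negP => /eqP xy; subst; lia. Qed.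

Lemma next_enum_ord x y : (next (enum 'I_m) x == y) = (val y == x.+1 %% m).
Proof.
have xin : x \in enum 'I_m by rewrite mem_enum.
rewrite next_nth xin index_enum_ord.
have hx := ltn_ord x; have hsz := size_enum_ord m.
case E: (enum 'I_m) xin hsz => [|y0 s] // _ /= hsz.
have -> : nth y0 s x = nth y0 (enum 'I_m) x.+1 by rewrite E.
rewrite modSn_cases //; case: ifP => h.
  apply/eqP/eqP => [<-|hy]; first by rewrite nth_enum_ord.
  by apply: ord_inj; rewrite nth_enum_ord.
rewrite nth_default; last by rewrite size_enum_ord; lia.
have -> : y0 = nth y0 (enum 'I_m) 0 by rewrite E.
apply/eqP/eqP => [<-|hy]; first by rewrite nth_enum_ord //; lia.
by apply: ord_inj; rewrite nth_enum_ord //; lia.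
Qed.

End CycleAdjacency.

Lemma cyc_adj3 (x y : 'I_3) : x != y -> cyc_adj x y.
Proof. by case: x y => [[|[|[|x]]] ?] [[|[|[|y]]] ?]. Qed.

Lemma set3C12 (T : finType) (a b d : T) : [set a; b; d] = [set b; a; d].
Proof. by apply/setP => u; rewrite !inE (orbC (u == a)). Qed.

Lemma set3C23 (T : finType) (a b d : T) : [set a; b; d] = [set a; d; b].
Proof. by apply/setP => u; rewrite !inE orbAC. Qed.

Lemma tri_setsP m k (c : colouring m k) S : reflect
  (exists x y z, [/\ x != y, y != z, x != z,
    [/\ c x y != c y z, c y z != c x z & c x y != c x z] &
    S = [set c x y; c y z; c x z]])
  (S \in tri_sets c).
Proof.
rewrite inE; apply: (iffP existsP).
  move=> [x /existsP[y /existsP[z]]].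
  move=> /and4P[xy yz xz /and4P[h1 h2 h3 /eqP ->]].
  by exists x, y, z.
move=> [x [y [z [xy yz xz [h1 h2 h3] ->]]]].
by exists x; apply/existsP; exists y; apply/existsP; exists z; rewrite xy yz xz h1 h2 h3 /=.
Qed.

Lemma has_colour_max k (S : {set 'I_k.+1}) : has_colour S k.+1 = (ord_max \in S).
Proof.
apply/existsP/idP => [[a /andP [aS /eqP va]]|h].
  by have -> : ord_max = a by apply: ord_inj; rewrite va.
by exists ord_max; rewrite h /=.
Qed.

Definition col_rel m k (c : colouring m k) (i : 'I_k) : rel 'I_m :=
  fun a b => (a != b) && (c a b == i).

Lemma col_rel_sym m k (c : colouring m k) i : sym_col c -> symmetric (col_rel c i).
Proof. by move=> hs a b; rewrite /col_rel eq_sym hs. Qed.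

Lemma connect_from (T : finType) (e : rel T) (z : T) : symmetric e ->
  (forall x, connect e z x) -> forall x y, connect e x y.
Proof.
move=> hs h x y; apply: connect_trans (h y).
by rewrite (sym_connect_sym hs).
Qed.

Lemma connected_col_used m k (c : colouring m k) (i : 'I_k) (x y : 'I_m) :
  connected_col c -> x != y -> exists a b, a != b /\ c a b = i.
Proof.
move=> c_conn xy; have /connectP [[|a s] /= xs e] := c_conn i x y.
  by rewrite e eqxx in xy.
by move: xs => /andP [/andP [xa /eqP xai] _]; exists x, a.
Qed.

Lemma connect_homo (T T' : finType) (f : T -> T') (e : rel T) (e' : rel T') :
  {homo f : x y / e x y >-> e' x y} -> forall x y, connect e x y -> connect e' (f x) (f y).
Proof.
move=> hf x _ /connectP [s es ->]; apply/connectP; exists (map f s).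
  exact: homo_path es.
by rewrite last_map.
Qed.

Lemma connect_ord_succ m (T : finType) (e : rel T) (g : 'I_m -> T) (x0 : 'I_m) :
  x0 = 0 :> nat -> (forall x y : 'I_m, y = x.+1 :> nat -> connect e (g x) (g y)) ->
  forall x, connect e (g x0) (g x).
Proof.
move=> x00 hstep x; have [v xv] : {v | x = v :> nat} by exists x.
elim: v x xv => [|v IH] x xv; first by rewrite (_ : x = x0) //; apply: val_inj; rewrite /= xv.
have vm : v < m by apply: ltnW; rewrite -xv ltn_ord.
apply: connect_trans (IH (Ordinal vm) erefl) _; exact: hstep.
Qed.

Section DoubleCover.

Variable N : nat.

Definition proj (x : 'I_(2 * N.+1)) : 'I_N.+1 := Ordinal (ltn_pmod x (ltn0Sn N)).

Lemma sheet_subproof (b : bool) (p : 'I_N.+1) : p + (if b then N.+1 else 0) < 2 * N.+1.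
Proof. by have := ltn_ord p; case: b => /=; lia. Qed.

Definition sheet b (p : 'I_N.+1) : 'I_(2 * N.+1) := Ordinal (sheet_subproof b p).

Lemma sheetE b (p : 'I_N.+1) : (sheet b p : nat) = p + (if b then N.+1 else 0).
Proof. by []. Qed.

Lemma projE (x : 'I_(2 * N.+1)) : (proj x : nat) = if x < N.+1 then (x : nat) else x - N.+1.
Proof.
rewrite /=; case: ifP => h; first by rewrite modn_small.
have hx := ltn_ord x.
have -> : (x : nat) = (x - N.+1) + N.+1 by lia.
rewrite modnDr modn_small; lia.
Qed.

Lemma proj_sheet b (p : 'I_N.+1) : proj (sheet b p) = p.
Proof. by apply: ord_inj; rewrite projE /=; have := ltn_ord p; case: b; case: ifP; lia. Qed.

Lemma sheet_proj (x : 'I_(2 * N.+1)) : exists b, x = sheet b (proj x).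
Proof.
exists (N.+1 <= x); apply: ord_inj; have E := projE x; simpl in E; rewrite /= E.
by have := ltn_ord x; case: ifP; case: ifP; lia.
Qed.

Lemma sheet_neq b b' (p q : 'I_N.+1) : p != q -> sheet b p != sheet b' q.
Proof. by apply: contra => /eqP /(congr1 proj); rewrite !proj_sheet => ->. Qed.

Hypothesis N_gt1 : 1 < N.

Lemma cyc_adj_proj (x y : 'I_(2 * N.+1)) : cyc_adj x y -> cyc_adj (proj x) (proj y).
Proof.
case: (sheet_proj x) => b ->; case: (sheet_proj y) => b' ->.
rewrite !proj_sheet !cyc_adjP ?sheetE; try lia.
by have := ltn_ord (proj x); have := ltn_ord (proj y); case: b; case: b'; lia.
Qed.

Lemma cyc_adj_proj_neq (x y : 'I_(2 * N.+1)) : cyc_adj x y -> proj x != proj y.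
Proof. by move/cyc_adj_proj; apply: cyc_adj_neq; lia. Qed.

Lemma cyc_adj_sheet_eq b b' (p q : 'I_N.+1) : ~~ cyc_adj p q ->
  cyc_adj (sheet b p) (sheet b' q) = cyc_adj p q.
Proof.
move=> h; rewrite (negbTE h); apply/negbTE/negP => /cyc_adj_proj.
by rewrite !proj_sheet; apply/negP.
Qed.

Lemma sheet_off_cycle b (p q : 'I_N.+1) :
  exists b', ~~ cyc_adj (sheet b p) (sheet b' q).
Proof.
case h: (cyc_adj (sheet b p) (sheet false q)); last by exists false; rewrite h.
exists true; apply/negP; have m_gt1 : 1 < 2 * N.+1 by lia.
move/(cyc_adjP _ _ m_gt1): h; rewrite (cyc_adjP _ _ m_gt1) !sheetE.
by have := ltn_ord p; have := ltn_ord q; case: b => /=; lia.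
Qed.

Lemma sheet_on_cycle b (p q : 'I_N.+1) : cyc_adj p q ->
  exists b', cyc_adj (sheet b p) (sheet b' q).
Proof.
move=> h; case h': (cyc_adj (sheet b p) (sheet false q)); first by exists false.
exists true; have m_gt1 : 1 < 2 * N.+1 by lia.
have n_gt1 : 1 < N.+1 by lia.
move/negbT/negP: h'; rewrite (cyc_adjP _ _ m_gt1) => h'; move: h'.
move/(cyc_adjP _ _ n_gt1): h; rewrite (cyc_adjP _ _ m_gt1) !sheetE.
by have := ltn_ord p; have := ltn_ord q; case: b => /=; lia.
Qed.

End DoubleCover.

Section ColourShift.

Variable K : nat.
Implicit Types i j : 'I_K.+2.

Definition widen_col j : 'I_K.+3 := widen_ord (leqnSn _) j.
Definition raise_col j : 'I_K.+3 := if j == ord_max then ord_max else widen_col j.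

Lemma widen_col_inj : injective widen_col.
Proof. by move=> i j /(congr1 val) /= /val_inj. Qed.

Lemma widen_col_max j : (widen_col j == ord_max) = false.
Proof. by apply/negbTE; rewrite -val_eqE /= neq_ltn ltn_ord. Qed.

Lemma raise_col_max : raise_col ord_max = ord_max.
Proof. by rewrite /raise_col eqxx. Qed.

Lemma raise_colE j : j != ord_max -> raise_col j = widen_col j.
Proof. by rewrite /raise_col => /negbTE ->. Qed.

Lemma raise_col_inj : injective raise_col.
Proof.
move=> i j; rewrite /raise_col; case: eqP => [->|hi]; case: eqP => [->|hj] //.
- by move=> /esym /eqP; rewrite widen_col_max.
- by move=> /eqP; rewrite widen_col_max.
- exact: widen_col_inj.
Qed.

Lemma raise_col_neq_widen_max j : raise_col j != widen_col ord_max.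
Proof.
rewrite /raise_col; case: ifP => [_|/negbT j_max]; first by rewrite eq_sym widen_col_max.
by rewrite (inj_eq widen_col_inj).
Qed.

End ColourShift.

Section DoubleColouring.

Variables (N K : nat) (c : colouring N.+1 K.+2).

Definition double_col : colouring (2 * N.+1) K.+3 :=
  fun x y => if cyc_adj x y then ord_max
             else if proj x == proj y then widen_col ord_max
             else widen_col (c (proj x) (proj y)).

Hypothesis N_gt2 : 2 < N.
Let N_gt1 : 1 < N := ltnW N_gt2.
Hypothesis c_sym : sym_col c.
Hypothesis c_top : forall p q : 'I_N.+1, p != q -> (c p q == ord_max) = cyc_adj p q.

Lemma double_col_sym : sym_col double_col.
Proof. by move=> x y; rewrite /double_col cyc_adj_sym (eq_sym (proj x)) c_sym. Qed.

Lemma double_col_cyc (x y : 'I_(2 * N.+1)) : cyc_adj x y -> double_col x y = ord_max.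
Proof. by rewrite /double_col => ->. Qed.

Lemma double_col_sheet b b' (p q : 'I_N.+1) : p != q ->
  ~~ cyc_adj (sheet b p) (sheet b' q) -> double_col (sheet b p) (sheet b' q) = widen_col (c p q).
Proof. by move=> pq h; rewrite /double_col (negbTE h) !proj_sheet (negbTE pq). Qed.

Lemma double_col_sheet_raise b b' (p q : 'I_N.+1) : p != q ->
  cyc_adj (sheet b p) (sheet b' q) = cyc_adj p q ->
  double_col (sheet b p) (sheet b' q) = raise_col (c p q).
Proof.
move=> pq h; rewrite /double_col h !proj_sheet (negbTE pq) /raise_col (c_top pq).
by case: (cyc_adj p q).
Qed.

Lemma tri_one_cycle_edge (x y z : 'I_N.+1) : x != y -> y != z -> x != z ->
  c x y != c y z -> c y z != c x z -> c x y != c x z ->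
  [/\ ~~ (cyc_adj x y && cyc_adj y z), ~~ (cyc_adj x y && cyc_adj x z)
    & ~~ (cyc_adj x z && cyc_adj y z)].
Proof.
move=> xy yz xz h1 h2 h3; split; apply/negP => /andP[].
- rewrite -(c_top xy) -(c_top yz) => /eqP e1 /eqP e2; by move: h1; rewrite e1 e2 eqxx.
- rewrite -(c_top xy) -(c_top xz) => /eqP e1 /eqP e2; by move: h3; rewrite e1 e2 eqxx.
- rewrite -(c_top xz) -(c_top yz) => /eqP e1 /eqP e2; by move: h2; rewrite e1 e2 eqxx.
Qed.

Section TriangleLifts.

Variables (x y z : 'I_N.+1).
Hypotheses (xy : x != y) (yz : y != z) (xz : x != z).
Hypotheses (cxy_yz : c x y != c y z) (cyz_xz : c y z != c x z) (cxy_xz : c x y != c x z).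

Lemma tri_lift_off_cycle : exists b1 b2 b3,
  [/\ ~~ cyc_adj (sheet b1 x) (sheet b2 y), ~~ cyc_adj (sheet b2 y) (sheet b3 z)
    & ~~ cyc_adj (sheet b1 x) (sheet b3 z)].
Proof.
have [A1 A2 A3] := tri_one_cycle_edge xy yz xz cxy_yz cyz_xz cxy_xz.
have off b b' (p q : 'I_N.+1) : ~~ cyc_adj p q -> ~~ cyc_adj (sheet b p) (sheet b' q).
  by move=> h; rewrite cyc_adj_sheet_eq.
case Hxy: (cyc_adj x y).
  move: A1 A2; rewrite Hxy /= => nyz nxz.
  have [b2 hb2] := sheet_off_cycle N_gt1 false x y.
  by exists false, b2, false; split => //; apply: off.
case Hxz: (cyc_adj x z).
  move: A3; rewrite Hxz /= => nyz.
  have [b3 hb3] := sheet_off_cycle N_gt1 false x z.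
  by exists false, false, b3; split => //; apply: off; rewrite ?Hxy.
have [b3 hb3] := sheet_off_cycle N_gt1 false y z.
by exists false, false, b3; split => //; apply: off; rewrite ?Hxy ?Hxz.
Qed.

Lemma tri_lift_on_cycle : exists b1 b2 b3,
  [/\ cyc_adj (sheet b1 x) (sheet b2 y) = cyc_adj x y,
      cyc_adj (sheet b2 y) (sheet b3 z) = cyc_adj y z
    & cyc_adj (sheet b1 x) (sheet b3 z) = cyc_adj x z].
Proof.
have [A1 A2 A3] := tri_one_cycle_edge xy yz xz cxy_yz cyz_xz cxy_xz.
case Hxy: (cyc_adj x y).
  move: A1 A2; rewrite Hxy /= => nyz nxz.
  have [b2 hb2] := sheet_on_cycle N_gt1 false Hxy.
  by exists false, b2, false; split; rewrite ?hb2 // cyc_adj_sheet_eq.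
case Hxz: (cyc_adj x z).
  move: A3; rewrite Hxz /= => nyz.
  have [b3 hb3] := sheet_on_cycle N_gt1 false Hxz.
  by exists false, false, b3; split; rewrite ?hb3 // cyc_adj_sheet_eq ?Hxy.
case Hyz: (cyc_adj y z).
  have [b3 hb3] := sheet_on_cycle N_gt1 false Hyz.
  by exists false, false, b3; split; rewrite ?hb3 // cyc_adj_sheet_eq ?Hxy ?Hxz.
by exists false, false, false; split; rewrite cyc_adj_sheet_eq ?Hxy ?Hxz ?Hyz.
Qed.

End TriangleLifts.

Lemma widen_tri_mem T : T \in tri_sets c -> [set widen_col j | j in T] \in tri_sets double_col.
Proof.
move=> /tri_setsP [x [y [z [xy yz xz [h1 h2 h3] ->]]]].
have [b1 [b2 [b3 [n1 n2 n3]]]] := tri_lift_off_cycle xy yz xz h1 h2 h3.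
apply/tri_setsP; exists (sheet b1 x), (sheet b2 y), (sheet b3 z).
rewrite !double_col_sheet //; split; try exact: sheet_neq.
  by rewrite !(inj_eq (@widen_col_inj K)).
by rewrite !(imsetU1, imsetU, imset_set1).
Qed.

Lemma raise_tri_mem T : T \in tri_sets c -> [set raise_col j | j in T] \in tri_sets double_col.
Proof.
move=> /tri_setsP [x [y [z [xy yz xz [h1 h2 h3] ->]]]].
have [b1 [b2 [b3 [n1 n2 n3]]]] := tri_lift_on_cycle xy yz xz h1 h2 h3.
apply/tri_setsP; exists (sheet b1 x), (sheet b2 y), (sheet b3 z).
rewrite !double_col_sheet_raise //; split; try exact: sheet_neq.
  by rewrite !(inj_eq (@raise_col_inj K)).
by rewrite !(imsetU1, imsetU, imset_set1).
Qed.

Variable col : 'I_K.+2.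
Hypothesis c_dist2 : forall x y : 'I_N.+1, val y = (val x).+2 %% N.+1 -> c x y = col.

Definition new_tri : {set 'I_K.+3} := [set ord_max; widen_col ord_max; widen_col col].

Lemma new_tri_mem : new_tri \in tri_sets double_col.
Proof.
have n_gt1 : 1 < N.+1 by lia.
have n_gt2 : 2 < N.+1 by lia.
have m_gt1 : 1 < 2 * N.+1 by lia.
pose v0 : 'I_N.+1 := ord0; pose v1 : 'I_N.+1 := Ordinal n_gt1.
pose v2 : 'I_N.+1 := Ordinal n_gt2.
have v01 : v0 != v1 by []; have v12 : v1 != v2 by []; have v02 : v0 != v2 by [].
have e01 : double_col (sheet false v0) (sheet false v1) = ord_max.
  by apply: double_col_cyc; rewrite cyc_adjP //=; lia.
have e12 : double_col (sheet false v1) (sheet true v2) = widen_col ord_max.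
  rewrite double_col_sheet //; last by apply/negP; rewrite cyc_adjP //= ?sheetE /=; lia.
  congr widen_col; apply/eqP; rewrite c_top // cyc_adjP //=; lia.
have c02 : c v0 v2 = col by apply: c_dist2; rewrite /= modn_small.
have e02 : double_col (sheet false v0) (sheet true v2) = widen_col col.
  rewrite double_col_sheet ?c02 //; apply/negP; rewrite cyc_adjP //= ?sheetE /=; lia.
have col_max : col != ord_max.
  rewrite -c02 c_top //; apply/negP; rewrite cyc_adjP //=; lia.
apply/tri_setsP; exists (sheet false v0), (sheet false v1), (sheet true v2).
rewrite e01 e12 e02; split => //; try exact: sheet_neq.
by rewrite eq_sym widen_col_max (inj_eq (@widen_col_inj K)) eq_sym col_max eq_sym
  widen_col_max.
Qed.

Lemma cycle_path_col (p q r : 'I_N.+1) :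
  p != r -> cyc_adj p q -> cyc_adj q r -> c p r = col.
Proof.
move=> pr; have n_gt1 : 1 < N.+1 by lia.
have pr' : (p : nat) <> r by move=> e; move/eqP: pr; apply; apply: ord_inj.
rewrite !cyc_adjP // => h1 h2.
have : (r : nat) = p.+2 %% N.+1 \/ (p : nat) = r.+2 %% N.+1.
  rewrite !modSSn_cases ?ltn_ord //.
  by have := ltn_ord p; have := ltn_ord r; have := ltn_ord q; case: ifP; case: ifP; lia.
by case=> h; [apply: c_dist2 | rewrite c_sym; apply: c_dist2].
Qed.

Lemma proj_neq_of_tri (x y z : 'I_(2 * N.+1)) :
  double_col x y != double_col y z -> double_col y z != double_col x z ->
  double_col x y != double_col x z -> proj x != proj y.
Proof.
move=> h1 h2 h3; apply/negP => /eqP e.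
have nxy : cyc_adj x y = false.
  by apply/negP => /(cyc_adj_proj_neq N_gt1); rewrite e eqxx.
move: h1 h2 h3; rewrite /double_col nxy e eqxx.
case Hxz: (cyc_adj x z); case Hyz: (cyc_adj y z) => /=; rewrite ?eqxx ?andbF //.
- have := cyc_adj_proj_neq N_gt1 Hxz; have := cyc_adj_proj N_gt1 Hxz; rewrite e => cp np.
  by rewrite (negbTE np); move/eqP: (c_top np); rewrite cp => ->; rewrite eqxx.
- have := cyc_adj_proj_neq N_gt1 Hyz; have := cyc_adj_proj N_gt1 Hyz => cp np.
  by rewrite (negbTE np); move/eqP: (c_top np); rewrite cp => ->; rewrite eqxx.
Qed.

Definition tri_origin (S : {set 'I_K.+3}) :=
  [\/ exists2 T, T \in tri_sets c & S = [set widen_col j | j in T],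
      exists2 T, T \in tri_sets c & S = [set raise_col j | j in T]
    | S = new_tri].

Lemma tri_origin_cycle_edge (p q r : 'I_N.+1) : p != q -> q != r -> p != r ->
  cyc_adj p q -> c q r != c p r ->
  tri_origin [set ord_max; widen_col (c q r); widen_col (c p r)].
Proof.
move=> pq qr pr cpq cqr_pr.
have /eqP cpq_max : c p q == ord_max by rewrite c_top.
case Hqr: (cyc_adj q r).
  apply: Or33; rewrite (cycle_path_col pr cpq Hqr).
  by have /eqP -> : c q r == ord_max by rewrite c_top.
case Hpr: (cyc_adj p r).
  apply: Or33; rewrite (cycle_path_col qr _ Hpr); last by rewrite cyc_adj_sym.
  have /eqP -> : c p r == ord_max by rewrite c_top.
  by rewrite /new_tri set3C23.
apply: Or32; exists [set c p q; c q r; c p r].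
  apply/tri_setsP; exists p, q, r; split => //; split => //.
    by rewrite cpq_max eq_sym c_top ?Hqr.
  by rewrite cpq_max eq_sym c_top ?Hpr.
rewrite !(imsetU1, imsetU, imset_set1) cpq_max raise_col_max !raise_colE //.
  by rewrite c_top ?Hpr.
by rewrite c_top ?Hqr.
Qed.

(* Only the edge [xy] may lie on the 2n-cycle; any multicoloured triangle of
   [double_col] is reduced to this case by relabelling its vertices. *)
Lemma tri_origin_lift (x y z : 'I_(2 * N.+1)) :
  proj x != proj y -> proj y != proj z -> proj x != proj z ->
  double_col x y != double_col y z -> double_col y z != double_col x z ->
  double_col x y != double_col x z -> ~~ cyc_adj x z -> ~~ cyc_adj y z ->
  tri_origin [set double_col x y; double_col y z; double_col x z].
Proof.
case: (sheet_proj x) => b1 ->; case: (sheet_proj y) => b2 ->; case: (sheet_proj z) => b3 ->.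
move: (proj x) (proj y) (proj z) => p q r; rewrite !proj_sheet => pq qr pr h1 h2 h3 nxz nyz.
move: h1 h2 h3; rewrite (double_col_sheet qr nyz) (double_col_sheet pr nxz) => h1 h2 h3.
case Hxy: (cyc_adj (sheet b1 p) (sheet b2 q)).
  have cpq : cyc_adj p q by move: (cyc_adj_proj N_gt1 Hxy); rewrite !proj_sheet.
  have cqr_pr : c q r != c p r by rewrite -(inj_eq (@widen_col_inj K)).
  by rewrite double_col_cyc //; apply: tri_origin_cycle_edge.
have nxy : ~~ cyc_adj (sheet b1 p) (sheet b2 q) by rewrite Hxy.
rewrite (double_col_sheet pq nxy) in h1 h3 *.
apply: Or31; exists [set c p q; c q r; c p r].
  by apply/tri_setsP; exists p, q, r; split => //; split; rewrite -(inj_eq (@widen_col_inj K)).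
by rewrite !(imsetU1, imsetU, imset_set1).
Qed.

Lemma tri_sets_double_origin S : S \in tri_sets double_col -> tri_origin S.
Proof.
move=> /tri_setsP [x [y [z [xy yz xz [h1 h2 h3] ->]]]].
have hs := double_col_sym.
have pxy : proj x != proj y by apply: (proj_neq_of_tri h1 h2 h3).
have pyz : proj y != proj z.
  by apply: (@proj_neq_of_tri y z x); rewrite ?(hs z x) ?(hs y x) // eq_sym.
have pxz : proj x != proj z.
  by apply: (@proj_neq_of_tri x z y); rewrite ?(hs z y) // eq_sym.
case Hxz: (cyc_adj x z).
  have nxy : ~~ cyc_adj x y.
    by apply/negP => /double_col_cyc e; move: h3; rewrite e double_col_cyc ?eqxx.
  have nyz : ~~ cyc_adj y z.
    by apply/negP => /double_col_cyc e; move: h2; rewrite e double_col_cyc ?eqxx.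
  rewrite set3C12 set3C23 set3C12 -(hs z y).
  by apply: tri_origin_lift; rewrite ?(hs z y) 1?(cyc_adj_sym z y) // eq_sym.
case Hyz: (cyc_adj y z).
  have nxy : ~~ cyc_adj x y.
    by apply/negP => /double_col_cyc e; move: h1; rewrite e double_col_cyc ?eqxx.
  rewrite set3C12 set3C23 -(hs z x) -(hs y x).
  apply: tri_origin_lift; rewrite ?(hs z x) ?(hs y x) 1?(cyc_adj_sym z x)
    1?(cyc_adj_sym y x) ?Hxz // eq_sym //.
by apply: tri_origin_lift; rewrite ?Hxz ?Hyz.
Qed.

Lemma connect_double_top x :
  connect (col_rel double_col ord_max) (sheet false ord0) x.
Proof.
have m_gt1 : 1 < 2 * N.+1 by lia.
apply: (@connect_ord_succ _ _ _ id) => // {}x y yx; apply: connect1.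
rewrite /col_rel double_col_cyc; last by apply/cyc_adjP => //; lia.
by rewrite eqxx andbT -val_eqE /= yx neq_ltn ltnSn.
Qed.

Lemma connect_double_k x :
  connect (col_rel double_col (widen_col ord_max)) (sheet false ord0) x.
Proof.
set e := col_rel double_col (widen_col ord_max).
have m_gt1 : 1 < 2 * N.+1 by lia.
have rung p : e (sheet false p) (sheet true p).
  apply/andP; split; first by rewrite -val_eqE /=; apply/eqP; lia.
  rewrite /double_col ifF ?proj_sheet ?eqxx //.
  by apply/negP; rewrite cyc_adjP //=; have := ltn_ord p; lia.
have step (p p' : 'I_N.+1) : p' = p.+1 :> nat -> e (sheet true p) (sheet false p').
  move=> pp'; have ne : p != p' by rewrite -val_eqE /= pp' neq_ltn ltnSn.
  rewrite /e /col_rel sheet_neq // double_col_sheet //.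
    have /eqP -> : c p p' == ord_max by rewrite c_top //; apply/cyc_adjP => //; lia.
    by rewrite eqxx.
  by apply/negP; rewrite cyc_adjP //= ?sheetE /=; have := ltn_ord p'; lia.
have low q : connect e (sheet false ord0) (sheet false q).
  apply: connect_ord_succ => // p p' pp'.
  exact: connect_trans (connect1 (rung p)) (connect1 (step _ _ pp')).
case: (sheet_proj x) => [[]] ->; last exact: low.
exact: connect_trans (low _) (connect1 (rung _)).
Qed.

Hypothesis c_conn : connected_col c.

Lemma connect_double_widen j : j != ord_max ->
  forall x, connect (col_rel double_col (widen_col j)) (sheet false ord0) x.
Proof.
move=> j_max; set e := col_rel double_col (widen_col j).
have lift_edge p r b b' : col_rel c j p r -> e (sheet b p) (sheet b' r).
  move=> /andP [pr /eqP cpr]; rewrite /e /col_rel sheet_neq // double_col_sheet ?cpr ?eqxx //.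
  by rewrite cyc_adj_sheet_eq // -(c_top pr) cpr.
have low q : connect e (sheet false ord0) (sheet false q).
  exact: connect_homo (fun p r => lift_edge p r false false) _ _ (c_conn j ord0 q).
have rung p : connect e (sheet false p) (sheet true p).
  have [p' pp'] : exists p' : 'I_N.+1, p != p'.
    case: (eqVneq p ord0) => [->|h]; last by exists ord0.
    have n_gt1 : 1 < N.+1 by lia.
    by exists (Ordinal n_gt1).
  have /connectP [[|r s] /= hp hl] := c_conn j p p'.
    by move: pp'; rewrite hl eqxx.
  move/andP: hp => [hpr _].
  apply: connect_trans (connect1 (lift_edge _ _ false false hpr)) (connect1 _).
  by apply: lift_edge; rewrite /col_rel eq_sym c_sym.
move=> x; case: (sheet_proj x) => [[]] ->; last exact: low.
exact: connect_trans (low _) (rung _).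
Qed.

Lemma double_col_connected : connected_col double_col.
Proof.
move=> i; apply: (connect_from (col_rel_sym _ double_col_sym)) => x.
case: (eqVneq i ord_max) => [->|i_max]; first exact: connect_double_top.
have hi : i < K.+2 by move: (ltn_ord i) i_max; rewrite -val_eqE /= ltnS leq_eqVlt => /orP[->|].
have -> : i = widen_col (Ordinal hi) by apply: val_inj.
case: (eqVneq (Ordinal hi) ord_max) => [->|j_max]; first exact: connect_double_k.
exact: connect_double_widen.
Qed.

Lemma double_col_cycle : colour_is_cycle double_col K.+3.
Proof.
exists (enum 'I_(2 * N.+1)); split; first exact: enum_uniq.
  by rewrite size_enum_ord; lia.
move=> x y xy; rewrite !mem_enum /= !next_enum_ord.
rewrite (_ : (val (double_col x y) == K.+2) = (double_col x y == ord_max)) //.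
by rewrite /double_col; case: ifP => h; [rewrite eqxx | case: ifP; rewrite widen_col_max].
Qed.

Lemma double_col_dist2 : dist2_const double_col.
Proof.
exists (widen_col col) => x y.
case: (sheet_proj x) => b ->; case: (sheet_proj y) => b' ->.
move: (proj x) (proj y) => p q.
have m_gt1 : 1 < 2 * N.+1 by lia.
have n_gt1 : 1 < N.+1 by lia.
rewrite /= modSSn_cases //; last by have := ltn_ord p; case: (b); lia.
have hp := ltn_ord p; have hq := ltn_ord q => E.
have pq2 : (q : nat) = p.+2 %% N.+1.
  by rewrite modSSn_cases //; move: E; case: b; case: b'; case: ifP; case: ifP => /=; lia.
have off : ~~ cyc_adj (sheet b p) (sheet b' q).
  by apply/negP; rewrite cyc_adjP // !sheetE; move: E; case: b; case: b'; case: ifP => /=; lia.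
have pq : p != q.
  by rewrite -val_eqE /=; apply/eqP; move: pq2; rewrite modSSn_cases //; case: ifP; lia.
by rewrite double_col_sheet // c_dist2.
Qed.

Let tri_top := [set T in tri_sets c | ord_max \in T].
Let with_top := [set S : {set 'I_K.+3} | ord_max \in S].

Lemma tri_sets_double_off_top :
  tri_sets double_col :\: with_top =
  [set [set widen_col j | j in T] | T : {set 'I_K.+2} in tri_sets c].
Proof.
apply/setP => S; rewrite in_setD [S \in with_top]inE.
apply/andP/imsetP => [[S_max /tri_sets_double_origin]|].
  case=> [[T Tc ->]|[T Tc ST]|SE]; first by exists T.
  - exists T => //; rewrite ST; apply: eq_in_imset => j jT; apply: raise_colE.
    by apply: contra S_max => /eqP j_max; rewrite ST -raise_col_max -j_max imset_f.
  - by move: S_max; rewrite SE !inE eqxx.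
move=> [T Tc ->]; split; last exact: widen_tri_mem.
by apply/imsetP => [[j _ /esym/eqP]]; rewrite widen_col_max.
Qed.

Lemma tri_sets_double_top :
  tri_sets double_col :&: with_top =
  new_tri |: [set [set raise_col j | j in T] | T : {set 'I_K.+2} in tri_top].
Proof.
apply/setP => S; rewrite in_setI in_setU1 [S \in with_top]inE; apply/andP/idP => [|].
  move=> [/tri_sets_double_origin [[T Tc SE]|[T Tc SE]|->] S_max]; last by rewrite eqxx.
    by move: S_max; rewrite SE => /imsetP [j _ /esym/eqP]; rewrite widen_col_max.
  move: S_max; rewrite SE => /imsetP [j jT j_max]; apply/orP; right; apply/imsetP.
  exists T => //; rewrite inE Tc /=; suff -> : ord_max = j by [].
  by apply: raise_col_inj; rewrite raise_col_max.
case/orP => [/eqP ->|/imsetP [T]]; first by rewrite new_tri_mem !inE eqxx.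
rewrite inE => /andP [Tc T_max] ->; split; first exact: raise_tri_mem.
by apply/imsetP; exists ord_max; rewrite ?raise_col_max.
Qed.

Lemma n_tri_with_top : n_tri_with c K.+2 = #|tri_top|.
Proof. by apply: eq_card => T; rewrite !inE has_colour_max. Qed.

Lemma n_tri_with_double : n_tri_with double_col K.+3 = (n_tri_with c K.+2).+1.
Proof.
have new_raised :
    new_tri \notin [set [set raise_col j | j in T] | T : {set 'I_K.+2} in tri_top].
  apply/imsetP => [[T _ E]].
  have : widen_col ord_max \in new_tri by rewrite !inE eqxx orbT.
  by rewrite E => /imsetP [j _ /eqP]; rewrite eq_sym (negbTE (raise_col_neq_widen_max _)).
transitivity #|tri_sets double_col :&: with_top|.
  by apply: eq_card => S; rewrite !inE has_colour_max.
rewrite tri_sets_double_top cardsU1 new_raised n_tri_with_top.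
by rewrite (card_imset _ (imset_inj (@raise_col_inj K))).
Qed.

Lemma card_tri_sets_double :
  #|tri_sets double_col| = #|tri_sets c| + (n_tri_with c K.+2).+1.
Proof.
rewrite -(cardsID with_top) -n_tri_with_double addnC.
rewrite tri_sets_double_off_top (card_imset _ (imset_inj (@widen_col_inj K))).
by congr (_ + _); apply: eq_card => S; rewrite !inE has_colour_max.
Qed.

End DoubleColouring.

Theorem lemma6 (k n l : nat) (c : colouring n k) :
  1 <= k -> 3 <= n ->
  sym_col c -> connected_col c ->
  #|tri_sets c| = l ->
  n_tri_with c k + 2 = k ->
  (forall x y : 'I_n, x != y -> (val (c x y) == k.-1) = cyc_adj x y) ->
  dist2_const c ->
  exists c' : colouring (2 * n) k.+1,
    [/\ sym_col c' /\ connected_col c',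
        #|tri_sets c'| = l + k - 1,
        n_tri_with c' k.+1 = k - 1,
        colour_is_cycle c' k.+1 &
        dist2_const c'].
Proof.
move=> k_ge1 n_ge3 c_sym c_conn <- k_tri c_top [col c_dist2].
case: k => [|[|K]] // in k_ge1 c c_sym c_conn k_tri c_top col c_dist2 *.
  by rewrite addn2 in k_tri.
case: n => [|N] // in c c_sym c_conn k_tri c_top col c_dist2 n_ge3 *.
have top (p q : 'I_N.+1) : p != q -> (c p q == ord_max) = cyc_adj p q.
  by move=> pq; rewrite -c_top // -val_eqE.
have N_gt2 : 2 < N.
  (* For n = 3 every edge lies on the cycle, leaving colour 1 without edges. *)
  rewrite ltn_neqAle -ltnS n_ge3 andbT; apply/eqP => N2; subst N.
  have [a [b [ab cab]]] := connected_col_used (x := ord0) (y := ord_max) ord0 c_conn isT.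
  by move: (top a b ab); rewrite cab cyc_adj3 // -val_eqE.
exists (double_col c); split.
- by split; [exact: double_col_sym | exact: double_col_connected].
- by rewrite (card_tri_sets_double N_gt2 c_sym top c_dist2); lia.
- by rewrite (n_tri_with_double N_gt2 c_sym top c_dist2); lia.
- exact: double_col_cycle.
- by apply: (double_col_dist2 N_gt2); exact c_dist2.
Qed.
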